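(* Let $\lambda,\mu\in P^+$ and let $X\subseteq\mathcal{B}(\lambda)$, $Y\subseteq\mathcal{B}(\mu)$ be subsets. If $X\otimes Y$ is an extremal subset of $\mathcal{B}(\lambda)\otimes\mathcal{B}(\mu)$, then $e_i(X)\subseteq X\sqcup\{0\}$ for all $i\in I$. Furthermore, if in addition $e_i(Y)\subseteq Y\sqcup\{0\}$ for all $i\in I$, then $X$ is an extremal subset of $\mathcal{B}(\lambda)$.
   Context: $\mathfrak g$ is a complex semisimple Lie algebra with Dynkin index set $I$ and dominant weights $P^+$. For $\lambda\in P^+$, $\mathcal{B}(\lambda)$ is Kashiwara's crystal of the irreducible module of highest weight $\lambda$, with operators $e_i,f_i:\mathcal{B}(\lambda)\to\mathcal{B}(\lambda)\sqcup\{0\}$, $\varepsilon_i(b)=\max\{k:e_i^k(b)\ne0\}$, $\varphi_i(b)=\max\{k:f_i^k(b)\ne0\}$. The tensor product crystal $\mathcal{B}(\lambda)\otimes\mathcal{B}(\mu)$ has $e_i(b_1\otimes b_2)=e_i(b_1)\otimes b_2$ if $\varepsilon_i(b_2)\le\varphi_i(b_1)$, else $b_1\otimes e_i(b_2)$; $f_i(b_1\otimes b_2)=f_i(b_1)\otimes b_2$ if $\varepsilon_i(b_2)<\varphi_i(b_1)$, else $b_1\otimes f_i(b_2)$. An $i$-string is a connected component of the graph with edges $b\to f_i(b)$. A subset $X$ of a crystal $\mathcal{B}$ is extremal if $X$ is nonempty and for every $i\in I$ and every $i$-string $S$ of $\mathcal{B}$, $S\cap X$ is $\varnothing$, $S$,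 or $\{b\}$ with $b\in S$, $e_i(b)=0$. *)

From mathcomp Require Import all_boot.
Set Implicit Arguments. Unset Strict Implicit. Unset Printing Implicit Defensive.

Section Crystals.
Variables (I : Type) (B : finType).

(* The value [None] plays the role of the element 0. *)
Fixpoint opt_iter (g : B -> option B) (n : nat) (b : B) : option B :=
  match n with
  | 0 => Some b
  | n'.+1 => obind g (opt_iter g n' b)
  end.

(* max { k : g^k b <> 0 }  (crystal strings in a finite crystal have length < #|B|) *)
Definition str_len (g : B -> option B) (b : B) : nat :=
  \max_(k < #|B|.+1 | opt_iter g k b != None) (k : nat).

Definition eps (e : I -> B -> option B) (i : I) (b : B) : nat := str_len (e i) b.
Definition phi (f : I -> B -> option B) (i : I) (b : B) : nat := str_len (f i) b.

Definition seminormal (e f : I -> B -> option B) : Prop :=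
  (forall i b b', e i b = Some b' <-> f i b' = Some b) /\
  (forall i b, exists n, opt_iter (e i) n b = None) /\
  (forall i b, exists n, opt_iter (f i) n b = None).

Definition string_rel (fi : B -> option B) : rel B :=
  fun a b => (fi a == Some b) || (fi b == Some a).

Definition istring (f : I -> B -> option B) (i : I) (b : B) : {set B} :=
  [set b' | connect (string_rel (f i)) b b'].

Definition extremal (e f : I -> B -> option B) (X : {set B}) : Prop :=
  X != set0 /\
  forall i b, let S := istring f i b in
    S :&: X = set0 \/ S \subset X \/
    exists b0, S :&: X = [set b0] /\ e i b0 = None.

Definition e_stable (e : I -> B -> option B) (X : {set B}) : Prop :=
  forall i x x', x \in X -> e i x = Some x' -> x' \in X.

End Crystals.

Definition tens_e (I : Type) (B1 B2 : finType)
  (e1 f1 : I -> B1 -> option B1) (e2 f2 : I -> B2 -> option B2)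
  (i : I) (p : B1 * B2) : option (B1 * B2) :=
  let: (b1, b2) := p in
  if eps e2 i b2 <= phi f1 i b1 then omap (fun x => (x, b2)) (e1 i b1)
  else omap (fun y => (b1, y)) (e2 i b2).

Definition tens_f (I : Type) (B1 B2 : finType)
  (e1 f1 : I -> B1 -> option B1) (e2 f2 : I -> B2 -> option B2)
  (i : I) (p : B1 * B2) : option (B1 * B2) :=
  let: (b1, b2) := p in
  if eps e2 i b2 < phi f1 i b1 then omap (fun x => (x, b2)) (f1 i b1)
  else omap (fun y => (b1, y)) (f2 i b2).

(* An i-string is closed under e_i, so an extremal set meets the string of any
   of its elements b either in the whole string or only in b, which is then a
   string head. For x in X with e_i x <> 0 and y in Y, (x, y) is not a head in
   the tensor product, so its whole string lies in X ⊗ Y; applying the tensor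
   e_i repeatedly to (x, y) eventually acts on the left factor and reaches some
   (e_i x, y'), whence e_i x is in X. If Y is e-stable it contains a y with
   eps_i y = 0; then x |-> (x, y) maps i-strings into i-strings and commutes
   with e_i, so the extremality of X ⊗ Y at (x, y) restricts to X at x. *)
From mathcomp Require Import all_boot.
Set Implicit Arguments. Unset Strict Implicit. Unset Printing Implicit Defensive.

Section StringLength.
Variables (B : finType) (g : B -> option B).
Hypothesis g_terminates : forall b, exists n, opt_iter g n b = None.

Lemma opt_iterD m n b :
  opt_iter g (m + n) b = obind (opt_iter g n) (opt_iter g m b).
Proof.
elim: n => [|n IHn]; first by rewrite addn0; case: (opt_iter g m b).
by rewrite addnS /= IHn; case: (opt_iter g m b).
Qed.

Lemma opt_iterSl n b c : g b = Some c -> opt_iter g n.+1 b = opt_iter g n c.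
Proof. by move=> gb; rewrite -add1n opt_iterD /= gb. Qed.

Lemma opt_iter_None_leq m n b :
  m <= n -> opt_iter g m b = None -> opt_iter g n b = None.
Proof. by move=> /subnKC <- gm; rewrite opt_iterD gm. Qed.

Lemma opt_iter_no_cycle m n b z : m < n ->
  opt_iter g m b = Some z -> opt_iter g n b = Some z -> False.
Proof.
move=> lt_mn gm gn.
have period : opt_iter g (n - m) z = Some z.
  by move: gn; rewrite -{1}(subnKC (ltnW lt_mn)) opt_iterD gm.
have periodM k : opt_iter g (k * (n - m)) z = Some z.
  by elim: k => [|k IHk] //; rewrite mulSn opt_iterD period.
have [k gk] := g_terminates z.
have pos_period : 0 < n - m by rewrite subn_gt0.
by have := opt_iter_None_leq (leq_pmulr k pos_period) gk; rewrite periodM.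
Qed.

(* Pigeonhole: #|B|.+1 defined iterates would repeat, i.e. cycle. *)
Lemma opt_iter_card b : opt_iter g #|B| b = None.
Proof.
case gB: (opt_iter g #|B| b) => [z|] //; exfalso.
have defined k : k <= #|B| -> opt_iter g k b != None.
  by move=> le_kB; apply/eqP => gk; rewrite (opt_iter_None_leq le_kB gk) in gB.
pose F (k : 'I_#|B|.+1) := odflt b (opt_iter g k b).
have F_inj : injective F.
  move=> k1 k2; rewrite /F.
  move: (defined k1 (ltn_ord k1)) (defined k2 (ltn_ord k2)).
  case g1: (opt_iter g k1 b) => [z1|] // _.
  case g2: (opt_iter g k2 b) => [z2|] // _.
  move=> /= z12; subst z2.
  case: (ltngtP k1 k2) => [lt12|lt21|/val_inj //].
  - by case: (opt_iter_no_cycle lt12 g1 g2).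
  - by case: (opt_iter_no_cycle lt21 g2 g1).
by have := leq_card F F_inj; rewrite card_ord ltnn.
Qed.

Lemma str_len_eq n b : opt_iter g n b != None -> opt_iter g n.+1 b = None ->
  str_len g b = n.
Proof.
move=> gn gSn.
have lt_nB : n < #|B|.+1.
  rewrite ltnS leqNgt; apply/negP => lt_Bn.
  by move: gn; rewrite (opt_iter_None_leq (ltnW lt_Bn) (opt_iter_card b)).
apply/eqP; rewrite eqn_leq; apply/andP; split.
  apply/bigmax_leqP => k gk; rewrite leqNgt; apply/negP => lt_nk.
  by move: gk; rewrite (opt_iter_None_leq lt_nk gSn).
exact: (@leq_bigmax_cond _ (fun k : 'I_#|B|.+1 => opt_iter g k b != None)
          (fun k => nat_of_ord k) (Ordinal lt_nB) gn).
Qed.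

Lemma opt_iter_last b :
  exists n, opt_iter g n b != None /\ opt_iter g n.+1 b = None.
Proof.
have [N gN] := g_terminates b.
elim: N gN => [|N IHN] // gSN.
case gN: (opt_iter g N b) => [z|]; last exact: IHN.
by exists N; rewrite gN.
Qed.

Lemma str_len_None b : g b = None -> str_len g b = 0.
Proof. by move=> gb; apply: str_len_eq => //=; rewrite gb. Qed.

Lemma str_len_Some b c : g b = Some c -> str_len g b = (str_len g c).+1.
Proof.
move=> gb; have [n [gn gSn]] := opt_iter_last c.
by rewrite (str_len_eq gn gSn); apply: str_len_eq; rewrite (opt_iterSl _ gb).
Qed.

Lemma str_len_gt0 b : 0 < str_len g b -> exists c, g b = Some c.
Proof. by case gb: (g b) => [c|]; [exists c | rewrite str_len_None]. Qed.

Lemma exists_stable_end (P : pred B) b :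
  (forall c c', P c -> g c = Some c' -> P c') -> P b ->
  exists2 c, P c & g c = None.
Proof.
move=> P_stable; have [n gn] := g_terminates b.
elim: n b gn => [|n IHn] // b gSn Pb.
case gb: (g b) => [c|]; last by exists b.
by apply: (IHn c); [rewrite -(opt_iterSl _ gb) | exact: P_stable Pb gb].
Qed.

End StringLength.

Lemma homo_connect (T1 T2 : finType) (r1 : rel T1) (r2 : rel T2) (h : T1 -> T2) :
  {homo h : a b / r1 a b >-> r2 a b} ->
  {homo h : a b / connect r1 a b >-> connect r2 a b}.
Proof.
move=> h_homo a b /connectP [p r1p ->].
apply/connectP; exists (map h p); first exact: homo_path h_homo r1p.
by rewrite last_map.
Qed.

Section Crystal.
Variables (I : Type) (B : finType) (e f : I -> B -> option B).

Lemma mem_istring i b : b \in istring f i b.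
Proof. by rewrite inE connect0. Qed.

Lemma istring_f i b b' : f i b' = Some b -> b' \in istring f i b.
Proof. by move=> fb'; rewrite inE connect1 //= /string_rel fb' eqxx orbT. Qed.

Lemma istring_trans i b b' c :
  b' \in istring f i b -> c \in istring f i b' -> c \in istring f i b.
Proof. by rewrite !inE; apply: connect_trans. Qed.

Lemma istring_sym i b b' : b' \in istring f i b -> b \in istring f i b'.
Proof.
have string_sym : symmetric (string_rel (f i)).
  by move=> a c; rewrite /string_rel orbC.
by rewrite !inE (sym_connect_sym string_sym).
Qed.

Lemma extremal_at X i b : extremal e f X -> b \in X ->
  istring f i b \subset X \/ (istring f i b :&: X = [set b] /\ e i b = None).
Proof.
move=> [_ ext] Xb; have SXb : b \in istring f i b :&: X by rewrite inE mem_istring.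
case: (ext i b) => [SX0 | [SX | [b0 [SXb0 eb0]]]]; [| by left | right].
  by rewrite SX0 inE in SXb.
by move: SXb; rewrite SXb0 => /set1P b_b0; subst b0.
Qed.

Lemma extremal_of_at X : X != set0 ->
  (forall i b, b \in X ->
     istring f i b \subset X \/ (istring f i b :&: X = [set b] /\ e i b = None)) ->
  extremal e f X.
Proof.
move=> X_neq0 ext; split=> // i b /=.
have [SX0 | /set0Pn [x]] := eqVneq (istring f i b :&: X) set0; first by left.
rewrite inE => /andP [Sx Xx]; right.
have same_string : istring f i x = istring f i b.
  by apply/setP => c; apply/idP/idP; apply: istring_trans => //; apply: istring_sym.
case: (ext i x Xx); rewrite same_string; first by left.
by move=> ?; right; exists x.
Qed.

Hypothesis hB : seminormal e f.

Lemma eps_None i b : e i b = None -> eps e i b = 0.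
Proof. by case: hB => _ [e_term _]; apply: str_len_None. Qed.

Lemma eps_Some i b b' : e i b = Some b' -> eps e i b = (eps e i b').+1.
Proof. by case: hB => _ [e_term _]; apply: str_len_Some. Qed.

Lemma phi_Some i b b' : f i b = Some b' -> phi f i b = (phi f i b').+1.
Proof. by case: hB => _ [_ f_term]; apply: str_len_Some. Qed.

Lemma phi_e i b b' : e i b = Some b' -> phi f i b' = (phi f i b).+1.
Proof. by case: hB => [ef _] /ef; apply: phi_Some. Qed.

Lemma eps_gt0 i b : 0 < eps e i b -> exists b', e i b = Some b'.
Proof. by case: hB => _ [e_term _]; apply: str_len_gt0. Qed.

Lemma e_stable_end Y i y : e_stable e Y -> y \in Y ->
  exists2 y', y' \in Y & e i y' = None.
Proof.
case: hB => _ [e_term _] Y_stable Yy.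
by apply: (exists_stable_end (e_term i)) Yy => c c'; apply: Y_stable.
Qed.

End Crystal.

Section Tensor.
Variables (I : Type) (B1 B2 : finType).
Variables (e1 f1 : I -> B1 -> option B1) (e2 f2 : I -> B2 -> option B2).
Hypotheses (hB1 : seminormal e1 f1) (hB2 : seminormal e2 f2).
Local Notation te := (tens_e e1 f1 e2 f2).
Local Notation tf := (tens_f e1 f1 e2 f2).

Lemma tens_e_fK i p p' : te i p = Some p' -> tf i p' = Some p.
Proof.
case: p => x y; rewrite /tens_e /tens_f.
case: leqP => [le_eps_phi | lt_phi_eps].
  case ex: (e1 i x) => [x'|] //= [<-].
  have fx' : f1 i x' = Some x by case: hB1 => [ef _]; apply/ef.
  by rewrite (phi_e hB1 ex) ltnS le_eps_phi fx'.
case ey: (e2 i y) => [y'|] //= [<-].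
have fy' : f2 i y' = Some y by case: hB2 => [ef _]; apply/ef.
by move: lt_phi_eps; rewrite (eps_Some hB2 ey) ltnS ltnNge => ->; rewrite fy'.
Qed.

Lemma istring_te i p p' : te i p = Some p' -> p' \in istring tf i p.
Proof. by move/tens_e_fK; apply: istring_f. Qed.

Lemma tens_e_neq_None i x y : e1 i x != None -> te i (x, y) != None.
Proof.
rewrite /tens_e; case: leqP => [_ | lt_phi_eps]; first by case: (e1 i x).
by have [y' ->] := eps_gt0 hB2 (leq_ltn_trans (leq0n _) lt_phi_eps).
Qed.

(* Applying the tensor e_i to (x, y) lowers eps_i of the right factor until it
   acts on the left one. *)
Lemma istring_tens_e1 i x x' y :
  e1 i x = Some x' -> exists y', (x', y') \in istring tf i (x, y).
Proof.
move=> ex; move eps_y: (eps e2 i y) => n.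
elim: n y eps_y => [|n IHn] y eps_y.
  by exists y; apply: istring_te; rewrite /tens_e eps_y leq0n ex.
case: (leqP (eps e2 i y) (phi f1 i x)) => [le_eps_phi | lt_phi_eps].
  by exists y; apply: istring_te; rewrite /tens_e le_eps_phi ex.
have [y' ey] := eps_gt0 hB2 (leq_ltn_trans (leq0n _) lt_phi_eps).
have te_xy : te i (x, y) = Some (x, y').
  by rewrite /tens_e leqNgt lt_phi_eps ey.
have [|y'' S'_xy''] := IHn y'.
  by move: eps_y; rewrite (eps_Some hB2 ey) => -[].
by exists y''; apply: istring_trans (istring_te te_xy) S'_xy''.
Qed.

Lemma tens_e_eps0 i x y :
  eps e2 i y = 0 -> te i (x, y) = omap (fun x' => (x', y)) (e1 i x).
Proof. by move=> eps_y; rewrite /tens_e eps_y leq0n. Qed.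

Lemma istring_tens_eps0 i x y w : eps e2 i y = 0 ->
  w \in istring f1 i x -> (w, y) \in istring tf i (x, y).
Proof.
move=> eps_y; rewrite !inE; apply: (homo_connect (h := fun a => (a, y))).
have tf_left a a' : f1 i a = Some a' -> tf i (a, y) = Some (a', y).
  by move=> fa; rewrite /tens_f eps_y (phi_Some hB1 fa) fa.
by move=> a a' /orP [] /eqP /tf_left tf_a; rewrite /string_rel tf_a eqxx ?orbT.
Qed.

Lemma extremal_tens_e_stable X Y :
  extremal te tf (setX X Y) -> e_stable e1 X.
Proof.
move=> XY_ext i x x' Xx ex.
have [[_ y] /setXP [_ Yy]] := set0Pn _ XY_ext.1.
have XYxy : (x, y) \in setX X Y by apply/setXP.
have [S_XY | [_ te_xy]] := extremal_at i XY_ext XYxy.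
  have [y' S_xy'] := istring_tens_e1 y ex.
  by have /setXP [] := subsetP S_XY _ S_xy'.
have ex_neq_None : e1 i x != None by rewrite ex.
by move: (tens_e_neq_None y ex_neq_None); rewrite te_xy.
Qed.

Lemma extremal_tens_left X Y :
  extremal te tf (setX X Y) -> e_stable e2 Y -> extremal e1 f1 X.
Proof.
move=> XY_ext Y_stable.
have [[x0 y0] /setXP [Xx0 Yy0]] := set0Pn _ XY_ext.1.
apply: extremal_of_at; first by apply/set0Pn; exists x0.
move=> i x Xx.
have [y Yy ey] := e_stable_end hB2 i Y_stable Yy0.
have eps_y : eps e2 i y = 0 by apply: (eps_None hB2).
have XYxy : (x, y) \in setX X Y by apply/setXP.
have [S_XY | [SXY te_xy]] := extremal_at i XY_ext XYxy.
  left; apply/subsetP => w Sw.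
  by have /setXP [] := subsetP S_XY _ (istring_tens_eps0 eps_y Sw).
right; split; last by move: te_xy; rewrite tens_e_eps0 //; case: (e1 i x).
apply/setP => w; rewrite in_setI in_set1.
apply/andP/eqP => [[Sw Xw] | ->]; last by rewrite mem_istring.
have : (w, y) \in istring tf i (x, y) :&: setX X Y.
  by rewrite in_setI istring_tens_eps0 //= in_setX Xw Yy.
by rewrite SXY => /set1P [].
Qed.

End Tensor.

Theorem proposition8p1 (I : Type) (B1 B2 : finType)
  (e1 f1 : I -> B1 -> option B1) (e2 f2 : I -> B2 -> option B2)
  (hB1 : seminormal e1 f1) (hB2 : seminormal e2 f2)
  (X : {set B1}) (Y : {set B2}) :
  extremal (tens_e e1 f1 e2 f2) (tens_f e1 f1 e2 f2) (setX X Y) ->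
  e_stable e1 X /\ (e_stable e2 Y -> extremal e1 f1 X).
Proof.
move=> XY_ext; split.
- exact: (extremal_tens_e_stable hB1 hB2 XY_ext).
- exact: (extremal_tens_left hB1 hB2 XY_ext).
Qed.
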